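(* Fix an integer $N\ge1$ and let $\lambda_n=8^n$ for $n\ge1$. Let $(m_n(t))_{n\ge1,t\ge0}$ be the solution of $$\frac{d}{dt}m_n(t)=-\lambda_nm_n(t)m_{n+1}(t),\quad n=1,2,\dots,$$ with $m_n(0)=2^{-n}$ for $n=1,\dots,2N$ and $m_n(0)=0$ for $n>2N$. Then for all $t\ge0$, $$m_{2n}(t)\ge\tfrac12m_{2n}(0)\quad(n\ge1),\qquad m_{2n+1}(t)\le m_{2n+1}(0)\exp\{-4^{2n}t\}\quad(n\ge0).$$
   Context: Since $m_n(0)=0$ for $n>2N$, one has $m_n\equiv0$ for $n>2N$, and the system reduces to a finite system of ODEs with a unique global non-negative solution. *)

From Stdlib Require Import Reals.
From Coquelicot Require Import Coquelicot.
Open Scope R_scope.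

Definition lam (n : nat) : R := 8 ^ n.

Definition is_solution (m : nat -> R -> R) : Prop :=
  forall n : nat, (1 <= n)%nat ->
    filterlim (m n) (at_right 0) (locally (m n 0)) /\
    (forall t : R, 0 < t -> is_derive (m n) t (- lam n * m n t * m (S n) t)).

Definition initial_data (N : nat) (m : nat -> R -> R) : Prop :=
  (forall n : nat, (1 <= n <= 2 * N)%nat -> m n 0 = (/ 2) ^ n) /\
  (forall n : nat, (2 * N < n)%nat -> m n 0 = 0).

From Stdlib Require Import Reals Lra Lia Arith.
From Coquelicot Require Import Coquelicot.
Open Scope R_scope.

(* Each equation is linear in m_n, so m_n(t) = m_n(0) exp(-lambda_n int_0^t m_(n+1)):
   the solution is nonnegative and vanishes beyond index 2N.  If m_(2n+2) stays
   above half its initial value, the rate lambda_(2n+1) m_(2n+2) of m_(2n+1) is at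
   least 4^(2n), which gives the exponential decay of m_(2n+1).  That decay makes
   the rate of m_(2n) integrable with total mass at most 1/2, so
   m_(2n) >= e^(-1/2) m_(2n)(0) >= m_(2n)(0)/2.  A downward induction starting
   from n = N, where m_(2N+1) = 0, closes the argument. *)

Lemma at_right0_le (f g : R -> R) (d : R) :
  filterlim f (at_right 0) (locally (f 0)) ->
  filterlim g (at_right 0) (locally (g 0)) ->
  0 < d -> (forall s, 0 < s < d -> f s <= g s) -> f 0 <= g 0.
Proof.
  intros Hf Hg Hd Hfg.
  apply (filterlim_le (F := at_right 0) f g (f 0) (g 0)); auto.
  exists (mkposreal d Hd); intros s Hs Hpos; apply Hfg; split; auto.
  apply Rabs_def2 in Hs; simpl in Hs; unfold minus, plus, opp in Hs; simpl in Hs; lra.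
Qed.

Lemma continuous_at_right (k : R -> R) (x : R) :
  continuous k x -> filterlim k (at_right x) (locally (k x)).
Proof. intros Hk; exact (filterlim_filter_le_1 k (filter_le_within (F := locally x) _) Hk). Qed.

Lemma at_right0_mult_continuous (f k : R -> R) :
  filterlim f (at_right 0) (locally (f 0)) -> continuous k 0 ->
  filterlim (fun s => f s * k s) (at_right 0) (locally (f 0 * k 0)).
Proof.
  intros Hf Hk.
  exact (filterlim_comp_2 f k Rmult Hf (continuous_at_right k 0 Hk)
           (filterlim_mult (K := R_AbsRing) (f 0) (k 0))).
Qed.

Lemma derive_nonneg_nondecreasing (f df : R -> R) :
  (forall t, 0 < t -> is_derive f t (df t)) -> (forall t, 0 < t -> 0 <= df t) ->
  forall x y, 0 < x -> x <= y -> f x <= f y.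
Proof.
  intros Hd Hdf x y Hx [Hxy | <-]; [| lra].
  destruct (MVT_gen f x y df) as [c [Hc Hmvt]].
  - intros t Ht. apply Hd. rewrite Rmin_left in Ht; lra.
  - intros t Ht. apply continuity_pt_filterlim, (ex_derive_continuous (V := R_NormedModule)).
    exists (df t). apply Hd. rewrite Rmin_left in Ht; lra.
  - rewrite Rmin_left, Rmax_right in Hc by lra.
    assert (0 <= df c) by (apply Hdf; lra). nra.
Qed.

Lemma derive_nonneg_ge_at0 (f df : R -> R) :
  filterlim f (at_right 0) (locally (f 0)) ->
  (forall t, 0 < t -> is_derive f t (df t)) -> (forall t, 0 < t -> 0 <= df t) ->
  forall t, 0 <= t -> f 0 <= f t.
Proof.
  intros Hf Hd Hdf t [Ht | <-]; [| lra].
  apply (at_right0_le f (fun _ => f t) t); auto.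
  - apply filterlim_const.
  - intros s Hs. apply (derive_nonneg_nondecreasing f df Hd Hdf); lra.
Qed.

Lemma derive_nonpos_le_at0 (f df : R -> R) :
  filterlim f (at_right 0) (locally (f 0)) ->
  (forall t, 0 < t -> is_derive f t (df t)) -> (forall t, 0 < t -> df t <= 0) ->
  forall t, 0 <= t -> f t <= f 0.
Proof.
  intros Hf Hd Hdf t [Ht | <-]; [| lra].
  apply (at_right0_le (fun _ => f t) f t); auto.
  - apply filterlim_const.
  - intros s Hs.
    cbv beta; enough (- f s <= - f t) by lra.
    apply (derive_nonneg_nondecreasing (fun u => - f u) (fun u => - df u)); [| | lra | lra].
    + intros u Hu. apply (is_derive_opp f). auto.
    + intros u Hu. specialize (Hdf u Hu). lra.
Qed.

Lemma is_derive_mult_exp (f w : R -> R) (t df dw : R) :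
  is_derive f t df -> is_derive w t dw ->
  is_derive (fun s => f s * exp (w s)) t ((df + f t * dw) * exp (w t)).
Proof.
  intros Hf Hw.
  pose proof (is_derive_comp exp w t _ _ (is_derive_exp (w t)) Hw) as Hew.
  pose proof (is_derive_mult f (fun s => exp (w s)) t _ _ Hf Hew Rmult_comm) as H.
  replace ((df + f t * dw) * exp (w t)) with
    (plus (mult df (exp (w t))) (mult (f t) (scal dw (exp (w t))))); [exact H |].
  change (df * exp (w t) + f t * (dw * exp (w t)) = (df + f t * dw) * exp (w t)); ring.
Qed.

(* [a] is only right-continuous at 0; extending it by the constant [a 0] to the left
   makes it continuous on all of R, so its primitive is differentiable at 0 too. *)
Definition extend_const_left (a : R -> R) (s : R) : R := a (Rmax 0 s).

Lemma continuous_extend_const_left (a : R -> R) :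
  filterlim a (at_right 0) (locally (a 0)) -> (forall t, 0 < t -> continuous a t) ->
  forall x, continuous (extend_const_left a) x.
Proof.
  intros Ha0 Ha x; unfold extend_const_left.
  destruct (Rtotal_order x 0) as [Hx | [-> | Hx]].
  - apply (continuous_ext_loc _ (fun _ => a 0)); [| apply continuous_const].
    apply (filter_imp (fun y => y < 0)); [| exact (open_lt 0 x Hx)].
    intros y Hy; rewrite Rmax_left; lra.
  - apply filterlim_locally; intros eps.
    rewrite (Rmax_left 0 0) by lra.
    apply (filter_imp (fun y => 0 < y -> ball (a 0) eps (a y))).
    + intros y Hy. destruct (Rlt_le_dec 0 y) as [Hy0 | Hy0].
      * rewrite Rmax_right by lra. auto.
      * rewrite Rmax_left by lra. apply ball_center.
    + apply (proj1 (filterlim_locally a (a 0)) Ha0 eps).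
  - apply (continuous_ext_loc _ a); [| apply Ha; lra].
    apply (filter_imp (fun y => 0 < y)); [| exact (open_gt 0 x Hx)].
    intros y Hy; rewrite Rmax_right; lra.
Qed.

Lemma is_derive_RInt_0 (h : R -> R) :
  (forall x, continuous h x) -> forall t, is_derive (fun s => RInt h 0 s) t (h t).
Proof.
  intros Hh t. apply (is_derive_RInt h _ 0); [| apply Hh].
  apply filter_forall; intros b. apply (RInt_correct (V := R_CompleteNormedModule)).
  apply (ex_RInt_continuous (V := R_CompleteNormedModule)); auto.
Qed.

Lemma linear_ode_exp_form (f a : R -> R) :
  filterlim f (at_right 0) (locally (f 0)) ->
  filterlim a (at_right 0) (locally (a 0)) ->
  (forall t, 0 < t -> continuous a t) ->
  (forall t, 0 < t -> is_derive f t (f t * a t)) ->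
  forall t, 0 <= t -> f t = f 0 * exp (RInt (extend_const_left a) 0 t).
Proof.
  intros Hf0 Ha0 Ha Hf t Ht.
  set (G := fun s => RInt (extend_const_left a) 0 s).
  assert (HG : forall s, is_derive (fun u => - G u) s (- extend_const_left a s)).
  { intros s. apply (is_derive_opp G).
    exact (is_derive_RInt_0 _ (continuous_extend_const_left a Ha0 Ha) s). }
  set (h := fun s => f s * exp (- G s)).
  assert (Hh : forall s, 0 < s -> is_derive h s 0).
  { intros s Hs.
    replace 0 with ((f s * a s + f s * - extend_const_left a s) * exp (- G s)).
    - apply (is_derive_mult_exp f (fun u => - G u)); auto.
    - unfold extend_const_left; rewrite Rmax_right by lra; ring. }
  assert (Hh0 : filterlim h (at_right 0) (locally (h 0))).
  { apply at_right0_mult_continuous; [exact Hf0 |].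
    apply continuous_exp_comp, (ex_derive_continuous (V := R_NormedModule)).
    eexists; apply HG. }
  assert (Hh_at0 : h 0 = f 0).
  { unfold h, G. rewrite (RInt_point 0 (extend_const_left a)).
    change (f 0 * exp (- 0) = f 0). rewrite Ropp_0, exp_0; ring. }
  assert (Hht : h t = f 0).
  { rewrite <- Hh_at0. apply Rle_antisym.
    - apply (derive_nonpos_le_at0 h (fun _ => 0)); auto; intros; lra.
    - apply (derive_nonneg_ge_at0 h (fun _ => 0)); auto; intros; lra. }
  rewrite <- Hht. unfold h. rewrite Rmult_assoc, <- exp_plus, Rplus_opp_l, exp_0; ring.
Qed.

Lemma le_exp_decay_of_rate_ge (f r : R -> R) (beta : R) :
  filterlim f (at_right 0) (locally (f 0)) ->
  (forall t, 0 < t -> is_derive f t (- r t * f t)) ->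
  (forall t, 0 <= t -> 0 <= f t) ->
  (forall t, 0 < t -> beta <= r t) ->
  forall t, 0 <= t -> f t <= f 0 * exp (- beta * t).
Proof.
  intros Hf0 Hf Hpos Hr t Ht.
  set (h := fun s => f s * exp (beta * s)).
  assert (Hw : forall s, is_derive (fun u => beta * u) s beta)
    by (intros s; auto_derive; [exact I | ring]).
  assert (Hh : forall s, 0 < s -> is_derive h s ((- r s * f s + f s * beta) * exp (beta * s)))
    by (intros s Hs; apply (is_derive_mult_exp f (fun u => beta * u)); auto).
  assert (Hh0 : filterlim h (at_right 0) (locally (h 0))).
  { apply at_right0_mult_continuous; [exact Hf0 |].
    apply continuous_exp_comp, (ex_derive_continuous (V := R_NormedModule)).
    eexists; apply Hw. }
  assert (Hht : h t <= f 0).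
  { replace (f 0) with (h 0) by (unfold h; rewrite Rmult_0_r, exp_0; ring).
    apply (derive_nonpos_le_at0 h _ Hh0 Hh); auto.
    intros s Hs. pose proof (exp_pos (beta * s)).
    assert (0 <= (r s - beta) * f s)
      by (apply Rmult_le_pos; [pose proof (Hr s Hs) | apply Hpos]; lra).
    nra. }
  replace (f t) with (h t * exp (- beta * t))
    by (unfold h; rewrite Rmult_assoc, <- exp_plus; replace (beta * t + - beta * t) with 0 by ring;
        rewrite exp_0; ring).
  apply Rmult_le_compat_r; [left; apply exp_pos | exact Hht].
Qed.

Lemma ge_exp_neg_half_of_rate_le (f r : R -> R) (beta : R) :
  filterlim f (at_right 0) (locally (f 0)) ->
  (forall t, 0 < t -> is_derive f t (- r t * f t)) ->
  (forall t, 0 <= t -> 0 <= f t) ->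
  (forall t, 0 < t -> r t <= / 2 * beta * exp (- beta * t)) ->
  forall t, 0 <= t -> f 0 * exp (- / 2) <= f t.
Proof.
  intros Hf0 Hf Hpos Hr t Ht.
  (* The weight exp w has w' = (beta/2) e^(-beta s), an upper bound of the rate,
     and exp w >= e^(-1/2) with equality at 0. *)
  set (w := fun s => - / 2 * exp (- beta * s)).
  assert (Hw : forall s, is_derive w s (/ 2 * beta * exp (- beta * s)))
    by (intros s; unfold w; auto_derive; [exact I | ring]).
  set (h := fun s => f s * exp (w s)).
  assert (Hh : forall s, 0 < s ->
    is_derive h s ((- r s * f s + f s * (/ 2 * beta * exp (- beta * s))) * exp (w s)))
    by (intros s Hs; apply is_derive_mult_exp; auto).
  assert (Hh0 : filterlim h (at_right 0) (locally (h 0))).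
  { apply at_right0_mult_continuous; [exact Hf0 |].
    apply continuous_exp_comp, (ex_derive_continuous (V := R_NormedModule)).
    eexists; apply Hw. }
  assert (Hht : f 0 * exp (- / 2) <= h t).
  { replace (f 0 * exp (- / 2)) with (h 0)
      by (unfold h, w; rewrite Rmult_0_r, exp_0; f_equal; f_equal; ring).
    apply (derive_nonneg_ge_at0 h _ Hh0 Hh); auto.
    intros s Hs. pose proof (exp_pos (w s)).
    assert (0 <= (/ 2 * beta * exp (- beta * s) - r s) * f s)
      by (apply Rmult_le_pos; [pose proof (Hr s Hs) | apply Hpos]; lra).
    nra. }
  assert (Hwt : exp (w t) <= 1).
  { rewrite <- exp_0. left; apply exp_increasing. unfold w. pose proof (exp_pos (- beta * t)). lra. }
  pose proof (Hpos t Ht). unfold h in Hht. nra.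
Qed.

Lemma lam_mul_half_pow (k : nat) : lam k * (/ 2) ^ (k + 1) = / 2 * 4 ^ k.
Proof.
  unfold lam. rewrite pow_add, pow_1, <- Rmult_assoc, <- Rpow_mult_distr.
  replace (8 * / 2) with 4 by field. ring.
Qed.

Lemma lam_succ_mul_half_pow (k : nat) : lam (k + 1) * (/ 2 * (/ 2) ^ (k + 2)) = 4 ^ k.
Proof.
  unfold lam. rewrite !pow_add.
  replace (8 ^ k * 8 ^ 1 * (/ 2 * ((/ 2) ^ k * (/ 2) ^ 2)))
    with ((8 * / 2) ^ k * (8 * / 2 * / 2 ^ 2)) by (rewrite Rpow_mult_distr; simpl; field).
  replace (8 * / 2) with 4 by field. simpl. field.
Qed.

Lemma half_le_exp_neg_half : / 2 <= exp (- / 2).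
Proof.
  assert (Hsq : exp (/ 2) * exp (/ 2) = exp 1) by (rewrite <- exp_plus; f_equal; field).
  pose proof exp_le_3. pose proof (exp_pos (/ 2)).
  rewrite exp_Ropp. apply Rinv_le_contravar; nra.
Qed.

Section Proposition.

Variables (N : nat) (m : nat -> R -> R).
Hypothesis m_solution : is_solution m.
Hypothesis m_initial : initial_data N m.

Lemma m_exp_form (n : nat) : (1 <= n)%nat ->
  forall t, 0 <= t -> exists G, m n t = m n 0 * exp G.
Proof.
  intros Hn t Ht.
  destruct (m_solution n Hn) as [Hright Hderiv].
  destruct (m_solution (S n) ltac:(lia)) as [Hright_succ Hderiv_succ].
  eexists. apply (linear_ode_exp_form (m n) (fun s => m (S n) s * - lam n)); auto.
  - apply at_right0_mult_continuous; [exact Hright_succ | apply continuous_const].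
  - intros s Hs. apply (continuous_mult (K := R_AbsRing)); [| apply continuous_const].
    apply (ex_derive_continuous (V := R_NormedModule)). eexists; apply Hderiv_succ, Hs.
  - intros s Hs. replace (m n s * (m (S n) s * - lam n)) with (- lam n * m n s * m (S n) s)
      by ring. auto.
Qed.

Lemma m_initial_bounds (n : nat) : (1 <= n)%nat -> 0 <= m n 0 <= (/ 2) ^ n.
Proof.
  intros Hn. destruct m_initial as [Hlow Hhigh].
  pose proof (pow_le (/ 2) n ltac:(lra)).
  destruct (le_lt_dec n (2 * N)).
  - rewrite Hlow by lia. lra.
  - rewrite Hhigh by lia. lra.
Qed.

Lemma m_nonneg (n : nat) : (1 <= n)%nat -> forall t, 0 <= t -> 0 <= m n t.
Proof.
  intros Hn t Ht. destruct (m_exp_form n Hn t Ht) as [G ->].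
  apply Rmult_le_pos; [apply m_initial_bounds, Hn | left; apply exp_pos].
Qed.

Lemma m_vanish (n : nat) : (2 * N < n)%nat -> forall t, 0 <= t -> m n t = 0.
Proof.
  intros Hn t Ht. destruct (m_exp_form n ltac:(lia) t Ht) as [G ->].
  rewrite (proj2 m_initial n Hn). ring.
Qed.

Lemma even_bound_of_odd_bound (j : nat) : (1 <= j)%nat ->
  (forall t, 0 <= t -> m (2 * j + 1) t <= m (2 * j + 1) 0 * exp (- 4 ^ (2 * j) * t)) ->
  forall t, 0 <= t -> / 2 * m (2 * j) 0 <= m (2 * j) t.
Proof.
  intros Hj Hodd t Ht.
  set (r := fun s => lam (2 * j) * m (2 * j + 1) s).
  destruct (m_solution (2 * j)%nat ltac:(lia)) as [H0 Hd].
  apply Rle_trans with (m (2 * j) 0 * exp (- / 2)).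
  { pose proof half_le_exp_neg_half.
    pose proof (m_nonneg (2 * j) ltac:(lia) 0 (Rle_refl 0)). nra. }
  apply (ge_exp_neg_half_of_rate_le (m (2 * j)) r (4 ^ (2 * j))); auto.
  - intros s Hs.
    replace (- r s * m (2 * j) s) with (- lam (2 * j) * m (2 * j) s * m (S (2 * j)) s) by (unfold r; replace (S (2 * j))%nat with (2 * j + 1)%nat by lia; ring).
    auto.
  - intros s Hs. apply m_nonneg; lia || lra.
  - intros s Hs. unfold r. rewrite <- lam_mul_half_pow, !Rmult_assoc.
    apply Rmult_le_compat_l; [unfold lam; apply pow_le; lra |].
    apply Rle_trans with (m (2 * j + 1) 0 * exp (- 4 ^ (2 * j) * s)); [apply Hodd; lra |].
    apply Rmult_le_compat_r; [left; apply exp_pos | apply m_initial_bounds; lia].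
Qed.

Lemma odd_bound_of_even_bound (j : nat) : (j < N)%nat ->
  (forall t, 0 <= t -> / 2 * m (2 * S j) 0 <= m (2 * S j) t) ->
  forall t, 0 <= t -> m (2 * j + 1) t <= m (2 * j + 1) 0 * exp (- 4 ^ (2 * j) * t).
Proof.
  intros Hj Heven.
  set (r := fun s => lam (2 * j + 1) * m (2 * S j) s).
  destruct (m_solution (2 * j + 1)%nat ltac:(lia)) as [H0 Hd].
  apply (le_exp_decay_of_rate_ge (m (2 * j + 1)) r); auto.
  - intros s Hs.
    replace (- r s * m (2 * j + 1) s)
      with (- lam (2 * j + 1) * m (2 * j + 1) s * m (S (2 * j + 1)) s) by (unfold r; replace (S (2 * j + 1))%nat with (2 * S j)%nat by lia; ring).
    auto.
  - intros s Hs. apply m_nonneg; lia || lra.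
  - intros s Hs. unfold r. rewrite <- lam_succ_mul_half_pow.
    apply Rmult_le_compat_l; [unfold lam; apply pow_le; lra |].
    replace (2 * j + 2)%nat with (2 * S j)%nat by lia.
    rewrite <- (proj1 m_initial (2 * S j)%nat) by lia. apply Heven; lra.
Qed.

Lemma odd_bound (j : nat) :
  forall t, 0 <= t -> m (2 * j + 1) t <= m (2 * j + 1) 0 * exp (- 4 ^ (2 * j) * t).
Proof.
  enough (H : forall k i, (N <= i + k)%nat -> forall t, 0 <= t ->
            m (2 * i + 1) t <= m (2 * i + 1) 0 * exp (- 4 ^ (2 * i) * t))
    by (apply (H N j); lia).
  induction k as [| k IH]; intros i Hi t Ht.
  - rewrite !m_vanish by lia || lra. lra.
  - destruct (le_lt_dec N (i + k)) as [Hik | Hik]; [apply IH; auto |].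
    apply odd_bound_of_even_bound; [lia | | exact Ht].
    apply (even_bound_of_odd_bound (S i)); [lia |].
    apply IH. lia.
Qed.

End Proposition.

Theorem proposition3p1 (N : nat) (m : nat -> R -> R) :
  (1 <= N)%nat ->
  is_solution m ->
  initial_data N m ->
  forall t : R, 0 <= t ->
    (forall n : nat, (1 <= n)%nat -> m (2 * n)%nat t >= / 2 * m (2 * n)%nat 0) /\
    (forall n : nat, m (2 * n + 1)%nat t <= m (2 * n + 1)%nat 0 * exp (- (4 ^ (2 * n)) * t)).
Proof.
  intros _ Hsol Hinit t Ht. split.
  - intros n Hn. apply Rle_ge.
    apply (even_bound_of_odd_bound N m Hsol Hinit n Hn); [| exact Ht].
    apply (odd_bound N m Hsol Hinit n).
  - intros n. apply (odd_bound N m Hsol Hinit n t Ht).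
Qed.
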